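(* For every $N\ge3$ and every choice of settings $X_j,X_j'$ ($j=1,\dots,N$), $|\langle I^N_{CHSH}\rangle|\le 2\sqrt2$. Moreover, if the settings satisfy (ND) and $\langle I^N_{CHSH}\rangle=\pm2\sqrt2$, then $\langle I^2_{CHSH}\rangle=\langle I^N_{CHSH}\rangle$.
   Context: $|G\rangle=\frac{1}{\sqrt2}(|0\cdots0\rangle+|1\cdots1\rangle)$ ($N$ qubits), $|\psi_+\rangle=\frac1{\sqrt2}(|00\rangle+|11\rangle)$, $\vec\sigma=(\sigma_x,\sigma_y,\sigma_z)$ Pauli matrices. For $j=1,\dots,N$: $X_j=\vec n_j\cdot\vec\sigma$, $X_j'=\vec n_j'\cdot\vec\sigma$ with $\vec n_j=(\sin\alpha_j\cos\varphi_j,\sin\alpha_j\sin\varphi_j,\cos\alpha_j)$, $\vec n_j'=(\sin\alpha_j'\cos\varphi_j',\sin\alpha_j'\sin\varphi_j',\cos\alpha_j')$, $\alpha_j,\alpha_j'\in[0,\pi]$. $\mathbb A_0=\bigotimes_{j=1}^{N-1}X_j$, $\mathbb A_1=\bigotimes_{j=1}^{N-1}X_j'$, $\mathbb B_0=X_N$, $\mathbb B_1=X_N'$, and $\langle I^N_{CHSH}\rangle=\sum_{a,b\in\{0,1\}}(-1)^{ab}\langle G|\mathbb A_a\otimes\mathbb B_b|G\rangle$. (ND): $D:=(\prod_{j=1}^{N-1}\cos\alpha_j)^2+(\prod_{j=1}^{N-1}\sin\alpha_j)^2\neq0$, $D':=(\prod_{j=1}^{N-1}\cos\alpha_j')^2+(\prod_{j=1}^{N-1}\sin\alpha_j')^2\neq0$,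 and if $N$ is odd, $\sin\alpha_N\neq0\neq\sin\alpha_N'$. Under (ND): $\varepsilon=D^{-1/2}$, $\varepsilon'=D'^{-1/2}$; $A_0=\vec{\mathrm n}_0\cdot\vec\sigma$, $\vec{\mathrm n}_0=\varepsilon(\prod_{j<N}\sin\alpha_j\cos\beta,\prod_{j<N}\sin\alpha_j\sin\beta,\prod_{j<N}\cos\alpha_j)$, $\beta=\sum_{j=1}^{N-1}\varphi_j$; $A_1$ likewise from primed parameters with $\varepsilon'$. If $N$ even, $B_0=X_N,B_1=X_N'$; if $N$ odd, $B_0=\cos\varphi_N\sigma_x+\sin\varphi_N\sigma_y$, $B_1=\cos\varphi_N'\sigma_x+\sin\varphi_N'\sigma_y$. $\langle I^2_{CHSH}\rangle=\sum_{a,b}(-1)^{ab}\langle\psi_+|A_a\otimes B_b|\psi_+\rangle$. *)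

From HB Require Import structures.
From mathcomp Require Import all_boot all_order all_algebra.
From mathcomp Require Import reals trigo.
From mathcomp.real_closed Require Import complex mxtens.

Set Implicit Arguments.
Unset Strict Implicit.
Unset Printing Implicit Defensive.

Import Order.TTheory GRing.Theory Num.Theory.
Local Open Scope ring_scope.
Local Open Scope complex_scope.

Section Quantum.
Variable R : realType.
Local Notation C := R[i].

Definition sigma_x : 'M[C]_2 :=
  \matrix_(i < 2, j < 2) (if i != j :> nat then 1 else 0).
Definition sigma_y : 'M[C]_2 :=
  \matrix_(i < 2, j < 2)
    (if (i == 0 :> nat) && (j == 1 :> nat) then - 'i
     else if (i == 1 :> nat) && (j == 0 :> nat) then 'i else 0).
Definition sigma_z : 'M[C]_2 :=
  \matrix_(i < 2, j < 2)
    (if i == j :> nat then (if i == 0 :> nat then 1 else -1) else 0).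

Definition spin (n1 n2 n3 : R) : 'M[C]_2 :=
  n1%:C *: sigma_x + n2%:C *: sigma_y + n3%:C *: sigma_z.

Definition setting (a p : R) : 'M[C]_2 :=
  spin (sin a * cos p) (sin a * sin p) (cos a).

Definition ket0 : 'cV[C]_2 := \col_(i < 2) (if i == 0 :> nat then 1 else 0).
Definition ket1 : 'cV[C]_2 := \col_(i < 2) (if i == 1 :> nat then 1 else 0).

Fixpoint tens_from {m n : nat} (f : nat -> 'M[C]_(m, n)) (i k : nat)
  : 'M[C]_(m ^ k.+1, n ^ k.+1) :=
  if k is k'.+1 then f i *t tens_from f i.+1 k' else f i.

Definition ktens {m n : nat} (u : 'cV[C]_m) (v : 'cV[C]_n) : 'cV[C]_(m * n) :=
  u *t v.

Fixpoint ktens_from {m : nat} (f : nat -> 'cV[C]_m) (i k : nat)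
  : 'cV[C]_(m ^ k.+1) :=
  if k is k'.+1 then ktens (f i) (ktens_from f i.+1 k') else f i.

Definition expect {d : nat} (psi : 'cV[C]_d) (M : 'M[C]_d) : C :=
  ((map_mx Num.conj psi)^T *m M *m psi) 0 0.

(* N-qubit GHZ state (1/sqrt2)(|0...0> + |1...1>), written as
   (|0>^{(x)(N-1)} (x) |0> + |1>^{(x)(N-1)} (x) |1>)/sqrt 2; here N >= 2 *)
Definition ghz (N : nat) : 'cV[C]_(2 ^ (N.-2).+1 * 2) :=
  (Num.sqrt (2 : R))^-1%:C *:
    (ktens (ktens_from (fun _ => ket0) 1 N.-2) ket0
     + ktens (ktens_from (fun _ => ket1) 1 N.-2) ket1).

Definition psi_plus : 'cV[C]_(2 * 2) :=
  (Num.sqrt (2 : R))^-1%:C *: (ktens ket0 ket0 + ktens ket1 ket1).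

Definition I_N_CHSH (N : nat) (alpha phi alpha' phi' : nat -> R) : C :=
  let X j := setting (alpha j) (phi j) in
  let X' j := setting (alpha' j) (phi' j) in
  let A0 := tens_from X 1 N.-2 in
  let A1 := tens_from X' 1 N.-2 in
  let B0 := X N in
  let B1 := X' N in
  expect (ghz N) (A0 *t B0) + expect (ghz N) (A0 *t B1)
  + expect (ghz N) (A1 *t B0) - expect (ghz N) (A1 *t B1).

Definition Dfun (N : nat) (alpha : nat -> R) : R :=
  (\prod_(1 <= j < N) cos (alpha j)) ^+ 2 + (\prod_(1 <= j < N) sin (alpha j)) ^+ 2.

Definition A_eff (N : nat) (alpha phi : nat -> R) : 'M[C]_2 :=
  let eps := (Num.sqrt (Dfun N alpha))^-1 in
  let beta := \sum_(1 <= j < N) phi j in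
  spin (eps * (\prod_(1 <= j < N) sin (alpha j)) * cos beta)
       (eps * (\prod_(1 <= j < N) sin (alpha j)) * sin beta)
       (eps * \prod_(1 <= j < N) cos (alpha j)).

Definition B_eff (N : nat) (alpha phi : nat -> R) : 'M[C]_2 :=
  if odd N then spin (cos (phi N)) (sin (phi N)) 0
  else setting (alpha N) (phi N).

Definition I_2_CHSH (N : nat) (alpha phi alpha' phi' : nat -> R) : C :=
  let A0 := A_eff N alpha phi in
  let A1 := A_eff N alpha' phi' in
  let B0 := B_eff N alpha phi in
  let B1 := B_eff N alpha' phi' in
  expect psi_plus (A0 *t B0) + expect psi_plus (A0 *t B1)
  + expect psi_plus (A1 *t B0) - expect psi_plus (A1 *t B1).

Definition ND (N : nat) (alpha alpha' : nat -> R) : Prop :=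
  Dfun N alpha != 0 /\ Dfun N alpha' != 0 /\
  (odd N -> sin (alpha N) != 0 /\ sin (alpha' N) != 0).

End Quantum.

From HB Require Import structures.
From mathcomp Require Import all_boot all_order all_algebra.
From mathcomp Require Import reals trigo.
From mathcomp.real_closed Require Import complex mxtens.
From mathcomp Require Import ring lra.

Set Implicit Arguments.
Unset Strict Implicit.
Unset Printing Implicit Defensive.

Import Order.TTheory GRing.Theory Num.Theory.
Local Open Scope ring_scope.
Local Open Scope complex_scope.

(* Every correlation <G| (X_1 (x) ... (x) X_{N-1}) (x) Y |G> is a real bilinear expression
   u . v in the Bloch vector u = (S cos beta, S sin beta, C) of A_0 (S, C the products of
   the sines and cosines of the alpha_j, so |u|^2 = D <= 1) and the Bloch vector v of Y, whose
   z-component drops out when N is odd.  The expression <I^N_CHSH> is therefore a two-qubit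
   CHSH expression in vectors of length at most 1, bounded by 2 sqrt 2 through a sum of
   squares.  Equality in that sum of squares forces all four vectors to be unit vectors:
   D = D' = 1, so epsilon = epsilon' = 1, and for odd N also sin alpha_N = sin alpha_N' = 1,
   after which the effective settings A_a, B_b are exactly u, v and <I^2_CHSH> = <I^N_CHSH>. *)

Section RealCHSH.
Variable R : rcfType.
Implicit Types (u v : R * R * R) (r e p q x y : R).

(* <psi_+| (u . sigma) (x) (v . sigma) |psi_+>: the Euclidean product with the y-axis reflected. *)
Definition corr u v : R := u.1.1 * v.1.1 - u.1.2 * v.1.2 + u.2 * v.2.

Definition sqnorm v : R := v.1.1 ^+ 2 + v.1.2 ^+ 2 + v.2 ^+ 2.

Definition chsh u0 u1 v0 v1 : R :=
  corr u0 v0 + corr u0 v1 + corr u1 v0 - corr u1 v1.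

(* (r p - e (x + y))^2 + (r q - e (x - y))^2 >= 0, expanded with r^2 = 2 and e^2 = 1. *)
Lemma chsh_coord_le r e p q x y : r ^+ 2 = 2 -> e ^+ 2 = 1 ->
  r * e * (p * (x + y) + q * (x - y)) <= p ^+ 2 + q ^+ 2 + x ^+ 2 + y ^+ 2.
Proof.
move=> r2 e2.
have sos : (r * p - e * (x + y)) ^+ 2 + (r * q - e * (x - y)) ^+ 2 =
    2 * (p ^+ 2 + q ^+ 2 + x ^+ 2 + y ^+ 2) - 2 * (r * e * (p * (x + y) + q * (x - y)))
    + (r ^+ 2 - 2) * (p ^+ 2 + q ^+ 2) + (e ^+ 2 - 1) * ((x + y) ^+ 2 + (x - y) ^+ 2).
  by ring.
rewrite r2 e2 !subrr !mul0r !addr0 in sos.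
have := sqr_ge0 (r * p - e * (x + y)); have := sqr_ge0 (r * q - e * (x - y)).
lra.
Qed.

Lemma chsh_le_sqnorm r e u0 u1 v0 v1 : r ^+ 2 = 2 -> e ^+ 2 = 1 ->
  r * e * chsh u0 u1 v0 v1 <= sqnorm u0 + sqnorm u1 + sqnorm v0 + sqnorm v1.
Proof.
move=> r2 e2.
case: u0 u1 v0 v1 => [[p1 p2] p3] [[q1 q2] q3] [[x1 x2] x3] [[y1 y2] y3].
have := chsh_coord_le p1 q1 x1 y1 r2 e2.
have := chsh_coord_le (- p2) (- q2) x2 y2 r2 e2.
have := chsh_coord_le p3 q3 x3 y3 r2 e2.
rewrite /chsh /corr /sqnorm /= !sqrrN; lra.
Qed.

Lemma sqrt2_sqr : Num.sqrt (2 : R) ^+ 2 = 2.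
Proof. by rewrite sqr_sqrtr // ler0n. Qed.

Lemma sqrt2_mul_2sqrt2 : Num.sqrt (2 : R) * (2 * Num.sqrt 2) = 4.
Proof. rewrite mulrCA -expr2 sqrt2_sqr; ring. Qed.

Lemma chsh_norm_le u0 u1 v0 v1 :
  sqnorm u0 <= 1 -> sqnorm u1 <= 1 -> sqnorm v0 <= 1 -> sqnorm v1 <= 1 ->
  `|chsh u0 u1 v0 v1| <= 2 * Num.sqrt 2.
Proof.
move=> u0_le1 u1_le1 v0_le1 v1_le1.
have := chsh_le_sqnorm u0 u1 v0 v1 sqrt2_sqr (expr1n _ _).
have := chsh_le_sqnorm u0 u1 v0 v1 sqrt2_sqr (sqrr_sign R 1).
have r_gt0 : 0 < Num.sqrt (2 : R) by rewrite sqrtr_gt0 ltr0n.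
rewrite mulr1 mulrN1 mulNr ler_norml => leN1 le1.
by apply/andP; split; rewrite -(ler_pM2l r_gt0) ?mulrN sqrt2_mul_2sqrt2; lra.
Qed.

Lemma chsh_extremal u0 u1 v0 v1 :
  sqnorm u0 <= 1 -> sqnorm u1 <= 1 -> sqnorm v0 <= 1 -> sqnorm v1 <= 1 ->
  chsh u0 u1 v0 v1 = 2 * Num.sqrt 2 \/ chsh u0 u1 v0 v1 = - (2 * Num.sqrt 2) ->
  [/\ sqnorm u0 = 1, sqnorm u1 = 1, sqnorm v0 = 1 & sqnorm v1 = 1].
Proof.
move=> u0_le1 u1_le1 v0_le1 v1_le1 [I_eq | I_eq].
- have := chsh_le_sqnorm u0 u1 v0 v1 sqrt2_sqr (expr1n _ _).
  by rewrite mulr1 I_eq sqrt2_mul_2sqrt2 => le4; split; lra.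
- have := chsh_le_sqnorm u0 u1 v0 v1 sqrt2_sqr (sqrr_sign R 1).
  by rewrite mulrN1 I_eq mulrNN sqrt2_mul_2sqrt2 => le4; split; lra.
Qed.

End RealCHSH.

Section Braket.
Variable R : realType.
Local Notation C := R[i].

Definition braket {d : nat} (u : 'cV[C]_d) (M : 'M[C]_d) (v : 'cV[C]_d) : C :=
  ((map_mx Num.conj u)^T *m M *m v) 0 0.

Lemma expectE d (psi : 'cV[C]_d) M : expect psi M = braket psi M psi.
Proof. by []. Qed.

Lemma braketDl d (u u' v : 'cV[C]_d) M : braket (u + u') M v = braket u M v + braket u' M v.
Proof. by rewrite /braket (map_mxD Num.conj) linearD /= !mulmxDl mxE. Qed.

Lemma braketDr d (u v v' : 'cV[C]_d) M : braket u M (v + v') = braket u M v + braket u M v'.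
Proof. by rewrite /braket !mulmxDr mxE. Qed.

Lemma braketZl d a (u v : 'cV[C]_d) M : braket (a *: u) M v = a^* * braket u M v.
Proof. by rewrite /braket (map_mxZ Num.conj) linearZ /= -!scalemxAl mxE. Qed.

Lemma braketZr d a (u v : 'cV[C]_d) M : braket u M (a *: v) = a * braket u M v.
Proof. by rewrite /braket -!scalemxAr mxE. Qed.

Lemma braket_tens m n (u v : 'cV[C]_m) (p q : 'cV[C]_n) (A : 'M[C]_m) (B : 'M[C]_n) :
  braket (u *t p) (A *t B) (v *t q) = braket u A v * braket p B q.
Proof.
have conj_tens : map_mx Num.conj (u *t p) = map_mx Num.conj u *t map_mx Num.conj p.
  by apply/matrixP => i j; rewrite !mxE rmorphM.
rewrite [LHS]/braket.
change ((((map_mx Num.conj (u *t p))^T : 'M_(1 * 1, m * n)) *m (A *t B) *m (v *t q)) 0 0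
  = braket u A v * braket p B q).
rewrite conj_tens trmx_tens !tensmx_mul [LHS]mxE.
by case: (mxtens_unindex _) => a b /=; rewrite (ord1 a) (ord1 b).
Qed.

Lemma braket_ktens_from k (f g : nat -> 'cV[C]_2) (X : nat -> 'M[C]_2) i :
  braket (ktens_from f i k) (tens_from X i k) (ktens_from g i k) =
  \prod_(i <= j < i + k.+1) braket (f j) (X j) (g j).
Proof.
elim: k i => [|k IHk] i /=; first by rewrite addn1 big_nat1.
rewrite /ktens braket_tens IHk [RHS]big_ltn; last by rewrite addnS ltnS leq_addr.
by rewrite addSn !addnS.
Qed.

Lemma braket_ket (M : 'M[C]_2) :
  (braket (ket0 R) M (ket0 R) = M 0 0) * (braket (ket0 R) M (ket1 R) = M 0 1) *
  (braket (ket1 R) M (ket0 R) = M 1 0) * (braket (ket1 R) M (ket1 R) = M 1 1).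
Proof.
by do !split; rewrite /braket !mxE !big_ord_recl !big_ord0 !mxE /=;
  rewrite !big_ord_recl !big_ord0 !mxE /= ?rmorph0 ?rmorph1;
  rewrite !(mul1r, mul0r, mulr1, mulr0, addr0, add0r); congr (M _ _); apply: val_inj.
Qed.

End Braket.

Section Correlations.
Variable R : realType.
Local Notation C := R[i].

Lemma inv_sqrt2_sqr : (Num.sqrt (2 : R))^-1 ^+ 2 = 2^-1.
Proof. by rewrite exprVn sqr_sqrtr // ler0n. Qed.

Lemma expect_ghz n (X : nat -> 'M[C]_2) (Y : 'M[C]_2) :
  expect (ghz R n.+2) (tens_from X 1 n *t Y) =
  2^-1 * (\prod_(1 <= j < n.+2) X j 0 0 * Y 0 0 + \prod_(1 <= j < n.+2) X j 0 1 * Y 0 1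
        + \prod_(1 <= j < n.+2) X j 1 0 * Y 1 0 + \prod_(1 <= j < n.+2) X j 1 1 * Y 1 1).
Proof.
rewrite expectE /ghz braketZl braketZr !braketDl !braketDr /ktens !braket_tens.
rewrite !braket_ktens_from add1n !braket_ket -[n.+2.-2.+2]/n.+2.
have -> : Num.conj ((Num.sqrt (2 : R))^-1)%:C = ((Num.sqrt 2)^-1)%:C by exact: conjc_real.
rewrite mulrA -rmorphM -expr2 inv_sqrt2_sqr rmorphV ?unitfE ?pnatr_eq0 // rmorph_nat !addrA.
by congr (_ * (_ * _ + _ * _ + _ * _ + _ * _)); apply: eq_bigr => j _; rewrite braket_ket.
Qed.

(* |psi_+> is, up to conversion, the GHZ state on two qubits. *)
Lemma expect_psi_plus (A B : 'M[C]_2) :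
  expect (psi_plus R) (A *t B) =
  2^-1 * (A 0 0 * B 0 0 + A 0 1 * B 0 1 + A 1 0 * B 1 0 + A 1 1 * B 1 1).
Proof. by have := expect_ghz 0 (fun=> A) B; rewrite !big_nat1. Qed.

Lemma spinE (a b c : R) :
  (spin a b c 0 0 = c%:C) * (spin a b c 0 1 = a +i* (- b)) *
  (spin a b c 1 0 = a +i* b) * (spin a b c 1 1 = (- c)%:C).
Proof. by do !split; rewrite /spin !mxE /=; simpc. Qed.

Definition expi (x : R) : C := cos x +i* sin x.

Lemma expiD x y : expi (x + y) = expi x * expi y.
Proof. by rewrite /expi cosD sinD; simpc; congr (_ +i* _); ring. Qed.

Lemma expi0 : expi 0 = 1.
Proof. by rewrite /expi cos0 sin0. Qed.

Lemma settingE (a p : R) :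
  (setting a p 0 0 = (cos a)%:C) * (setting a p 0 1 = (sin a)%:C * expi (- p)) *
  (setting a p 1 0 = (sin a)%:C * expi p) * (setting a p 1 1 = - (cos a)%:C).
Proof.
rewrite /setting !spinE /expi cosN sinN rmorphN.
by do !split; simpc; congr (_ +i* _); ring.
Qed.

Lemma prod_expi (I : Type) (r : seq I) (P : pred I) (f : I -> R) :
  \prod_(i <- r | P i) expi (f i) = expi (\sum_(i <- r | P i) f i).
Proof. by rewrite (big_morph expi expiD expi0). Qed.

Lemma prod_settingE (alpha phi : nat -> R) m k :
  (\prod_(m <= j < k) setting (alpha j) (phi j) 0 0 =
     (\prod_(m <= j < k) cos (alpha j))%:C) *
  (\prod_(m <= j < k) setting (alpha j) (phi j) 0 1 =
     (\prod_(m <= j < k) sin (alpha j))%:C * expi (- \sum_(m <= j < k) phi j)) *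
  (\prod_(m <= j < k) setting (alpha j) (phi j) 1 0 =
     (\prod_(m <= j < k) sin (alpha j))%:C * expi (\sum_(m <= j < k) phi j)) *
  (\prod_(m <= j < k) setting (alpha j) (phi j) 1 1 =
     (-1) ^+ (k - m) * (\prod_(m <= j < k) cos (alpha j))%:C).
Proof.
rewrite -sumrN; do !split; under eq_bigr => j _ do rewrite settingE.
- by rewrite rmorph_prod.
- by rewrite big_split /= rmorph_prod prod_expi.
- by rewrite big_split /= rmorph_prod prod_expi.
- under eq_bigr => j _ do rewrite -mulN1r.
  by rewrite big_split /= prodr_const_nat rmorph_prod.
Qed.

End Correlations.

Section BlochVectors.
Variable R : realType.
Implicit Types (alpha phi : nat -> R) (a p : R).

Definition bloch a p : R * R * R := (sin a * cos p, sin a * sin p, cos a).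

(* The vector n_0 / epsilon of the paper, i.e. the Bloch vector of A_0 before normalisation. *)
Definition A_vec (N : nat) alpha phi : R * R * R :=
  let S := \prod_(1 <= j < N) sin (alpha j) in
  let beta := \sum_(1 <= j < N) phi j in
  (S * cos beta, S * sin beta, \prod_(1 <= j < N) cos (alpha j)).

Definition B_vec (N : nat) alpha phi : R * R * R :=
  if odd N then (cos (phi N), sin (phi N), 0) else bloch (alpha N) (phi N).

(* For odd N the z-component of the last party's setting drops out of the GHZ correlations. *)
Definition B_vec_ghz (N : nat) a p : R * R * R :=
  (sin a * cos p, sin a * sin p, if odd N then 0 else cos a).

Lemma sqnorm_bloch a p : sqnorm (bloch a p) = 1.
Proof. by rewrite /sqnorm /= !exprMn -mulrDr cos2Dsin2 mulr1 addrC cos2Dsin2. Qed.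

Lemma sqnorm_A_vec N alpha phi : sqnorm (A_vec N alpha phi) = Dfun N alpha.
Proof. by rewrite /sqnorm /Dfun /= !exprMn -mulrDr cos2Dsin2 mulr1 addrC. Qed.

Lemma sqr_sin_le1 a : sin a ^+ 2 <= 1.
Proof. by rewrite -(cos2Dsin2 a) lerDr sqr_ge0. Qed.

Lemma sqr_cos_le1 a : cos a ^+ 2 <= 1.
Proof. by rewrite -(cos2Dsin2 a) lerDl sqr_ge0. Qed.

Lemma sqr_prod_le1 (f : nat -> R) m k : (forall j, f j ^+ 2 <= 1) ->
  (\prod_(m <= j < k) f j) ^+ 2 <= 1.
Proof.
move=> f_le1; rewrite -prodrXl.
by apply: prodr_ile1 => j _; rewrite sqr_ge0 f_le1.
Qed.

Lemma Dfun_le1 n alpha : Dfun n.+2 alpha <= 1.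
Proof.
have lt1n : (1 < n.+2)%N by [].
rewrite /Dfun !(big_ltn lt1n) !exprMn -[leRHS](cos2Dsin2 (alpha 1%N)).
by apply: lerD; apply: ler_piMr; rewrite ?sqr_ge0 //;
  apply: sqr_prod_le1 => j; rewrite ?sqr_sin_le1 ?sqr_cos_le1.
Qed.

Lemma sqnorm_B_vec_ghz_le1 N a p : sqnorm (B_vec_ghz N a p) <= 1.
Proof.
rewrite /sqnorm /=; case: odd.
  by rewrite expr0n addr0 !exprMn -mulrDr cos2Dsin2 mulr1 sqr_sin_le1.
by rewrite -(sqnorm_bloch a p).
Qed.

Lemma B_vec_ghz_eq N alpha phi : 0 <= sin (alpha N) ->
  sqnorm (B_vec_ghz N (alpha N) (phi N)) = 1 ->
  B_vec_ghz N (alpha N) (phi N) = B_vec N alpha phi.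
Proof.
rewrite /B_vec_ghz /B_vec /sqnorm /=; case: odd => // sin_ge0.
rewrite expr0n addr0 !exprMn -mulrDr cos2Dsin2 mulr1 => /eqP.
rewrite -(expr1n _ 2) eqrXn2 ?ler01 // => /eqP ->.
by rewrite !mul1r.
Qed.

End BlochVectors.

Section CHSHValues.
Variable R : realType.
Local Notation C := R[i].
Implicit Types (alpha phi : nat -> R) (a p : R).

Lemma normc_real (x : R) : `|x%:C| = `|x|%:C.
Proof. by rewrite normc_def /= expr0n addr0 sqrtr_sqr. Qed.

Lemma expect_psi_plus_spin (a1 a2 a3 b1 b2 b3 : R) :
  expect (psi_plus R) (spin a1 a2 a3 *t spin b1 b2 b3) = (corr (a1, a2, a3) (b1, b2, b3))%:C.
Proof.
(* Generalising the two matrices keeps the rewrites below from unfolding [spin]. *)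
rewrite expect_psi_plus; have := spinE a1 a2 a3; have := spinE b1 b2 b3.
move: (spin a1 a2 a3) (spin b1 b2 b3) => A B [[[-> ->] ->] ->] [[[-> ->] ->] ->].
by rewrite /corr /=; simpc; congr (_ +i* _); field.
Qed.

Lemma expect_ghz_setting n alpha phi a p :
  expect (ghz R n.+2) (tens_from (fun j => setting (alpha j) (phi j)) 1 n *t setting a p) =
  (corr (A_vec n.+2 alpha phi) (B_vec_ghz n.+2 a p))%:C.
Proof.
rewrite expect_ghz !prod_settingE !settingE subn1.
have -> : ((-1) ^+ n.+1 : C) = ((-1) ^+ n.+1 : R)%:C by rewrite rmorphXn rmorphN1.
rewrite /corr /A_vec /B_vec_ghz /= negbK exprS -signr_odd /expi !cosN !sinN.
by case: (odd n); simpc; congr (_ +i* _); field.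
Qed.

Lemma I_N_CHSH_E n (alpha phi alpha' phi' : nat -> R) :
  I_N_CHSH n.+2 alpha phi alpha' phi' =
  (chsh (A_vec n.+2 alpha phi) (A_vec n.+2 alpha' phi')
        (B_vec_ghz n.+2 (alpha n.+2) (phi n.+2))
        (B_vec_ghz n.+2 (alpha' n.+2) (phi' n.+2)))%:C.
Proof.
rewrite /chsh rmorphB 2!rmorphD.
by congr (_ + _ + _ - _); apply: expect_ghz_setting.
Qed.

Lemma B_eff_spin N alpha phi : B_eff N alpha phi =
  spin (B_vec N alpha phi).1.1 (B_vec N alpha phi).1.2 (B_vec N alpha phi).2.
Proof. by rewrite /B_eff /B_vec; case: odd. Qed.

Lemma expect_psi_plus_A_eff N alpha phi (b : R * R * R) :
  expect (psi_plus R) (A_eff N alpha phi *t spin b.1.1 b.1.2 b.2) =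
  ((Num.sqrt (Dfun N alpha))^-1 * corr (A_vec N alpha phi) b)%:C.
Proof. by rewrite /A_eff expect_psi_plus_spin /corr /=; congr _%:C; ring. Qed.

Lemma I_2_CHSH_E N (alpha phi alpha' phi' : nat -> R) :
  let u0 := A_vec N alpha phi in let u1 := A_vec N alpha' phi' in
  let w0 := B_vec N alpha phi in let w1 := B_vec N alpha' phi' in
  let e0 := (Num.sqrt (Dfun N alpha))^-1 in let e1 := (Num.sqrt (Dfun N alpha'))^-1 in
  I_2_CHSH N alpha phi alpha' phi' =
  (e0 * corr u0 w0 + e0 * corr u0 w1 + e1 * corr u1 w0 - e1 * corr u1 w1)%:C.
Proof.
move=> u0 u1 w0 w1 e0 e1; rewrite rmorphB 2!rmorphD.
by congr (_ + _ + _ - _); rewrite B_eff_spin; apply: expect_psi_plus_A_eff.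
Qed.

End CHSHValues.

Theorem mainTheorem2 (R : realType) (N : nat) (alpha phi alpha' phi' : nat -> R) :
  (3 <= N)%N ->
  (forall j : nat, (1 <= j <= N)%N ->
     0 <= alpha j <= pi /\ 0 <= alpha' j <= pi) ->
  `| I_N_CHSH N alpha phi alpha' phi' | <= (2 * Num.sqrt (2 : R))%:C /\
  (ND N alpha alpha' ->
   (I_N_CHSH N alpha phi alpha' phi' = (2 * Num.sqrt (2 : R))%:C \/
    I_N_CHSH N alpha phi alpha' phi' = - (2 * Num.sqrt (2 : R))%:C) ->
   I_2_CHSH N alpha phi alpha' phi' = I_N_CHSH N alpha phi alpha' phi').
Proof.
case: N => [|[|[|n]]] // _ angles.
have [/sin_ge0_pi sin0_ge0 /sin_ge0_pi sin1_ge0] := angles n.+3 (leqnn _).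
rewrite I_N_CHSH_E I_2_CHSH_E -(sqnorm_A_vec _ _ phi) -(sqnorm_A_vec _ _ phi').
set u0 := A_vec _ alpha phi; set u1 := A_vec _ alpha' phi'.
set v0 := B_vec_ghz _ (alpha _) _; set v1 := B_vec_ghz _ (alpha' _) _.
have u0_le1 : sqnorm u0 <= 1 by rewrite sqnorm_A_vec Dfun_le1.
have u1_le1 : sqnorm u1 <= 1 by rewrite sqnorm_A_vec Dfun_le1.
have v0_le1 : sqnorm v0 <= 1 := sqnorm_B_vec_ghz_le1 _ _ _.
have v1_le1 : sqnorm v1 <= 1 := sqnorm_B_vec_ghz_le1 _ _ _.
split; first by rewrite normc_real lecR chsh_norm_le.
move=> _ extremal.
have {}extremal : chsh u0 u1 v0 v1 = 2 * Num.sqrt 2 \/ chsh u0 u1 v0 v1 = - (2 * Num.sqrt 2).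
  by rewrite -rmorphN in extremal; case: extremal => /complexI; [left | right].
have [-> -> v0_1 v1_1] := chsh_extremal u0_le1 u1_le1 v0_le1 v1_le1 extremal.
rewrite sqrtr1 invr1 !mul1r.
by rewrite -(B_vec_ghz_eq sin0_ge0 v0_1) -(B_vec_ghz_eq sin1_ge0 v1_1).
Qed.
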